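(* Let $N\ge1$, $d$ be integers and $0\le m_1<\dots<m_N<d$. Then the Wronski determinant of the truncated binomials $P_{m_1;d},\dots,P_{m_N;d},P_{d;d}$ satisfies $$\det\Big(\tfrac{d^j}{dx^j}P_{m_i;d}(x)\Big)_{0\le i,j\le N}=c\cdot x^{\,m_1+\dots+m_N-N(N-1)/2}(x+1)^{d-N},$$ where $m_0:=d$ is used for the row of $P_{d;d}$ and $c$ is a nonzero constant.
   Context: The truncated binomial is $P_{m;d}(x)=\sum_{j=0}^{m}\binom{d}{j}x^j$ for $0\le m\le d$; $P_{d;d}(x)=(x+1)^d$. *)

From mathcomp Require Import all_boot all_order all_algebra.
Set Implicit Arguments. Unset Strict Implicit. Unset Printing Implicit Defensive.
Import GRing.Theory Num.Theory.
Local Open Scope ring_scope.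

Definition trunc_binom (R : nzRingType) (m d : nat) : {poly R} :=
  \sum_(j < m.+1) ('C(d, j))%:R *: 'X^j.

Definition wronski_tb (R : nzRingType) (N d : nat) (m : nat -> nat)
  : 'M[{poly R}]_(N.+1) :=
  \matrix_(i < N.+1, j < N.+1)
     (trunc_binom R (if (i == 0 :> nat) then d else m i) d)^`(j).

From mathcomp Require Import all_boot all_order all_algebra.
From mathcomp Require Import ring zify perm.
Set Implicit Arguments. Unset Strict Implicit. Unset Printing Implicit Defensive.
Import GRing.Theory Num.Theory.
Local Open Scope ring_scope.

(* The operator L f := (x + 1) f' - d f kills (x + 1)^d = P_{d;d} and sends
   P_{m;d} to -(d - m) C(d, m) x^m, because (j + 1) C(d, j + 1) = (d - j) C(d, j)
   makes all lower terms cancel.  Column operations with a triangular matrix of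
   determinant (x + 1)^N replace column j + 1 of the Wronskian by the j-th
   derivatives of L applied to the rows; expanding along the row of P_{d;d}
   gives  W * (x + 1)^N = (x + 1)^d * Wr(L P_{m_1;d}, ..., L P_{m_N;d}).  This
   is a Wronskian of monomials c_i x^{m_i}, i.e. x^(sum m_i - N(N-1)/2) times
   prod c_i times det (m_i^_j), a Vandermonde determinant in disguise, which is
   nonzero because the m_i are distinct and smaller than d. *)

Section BinomialOperator.
Variables (R : comNzRingType) (d : nat).

Definition binom_op (f : {poly R}) : {poly R} := ('X + 1) * f^`() - (d%:R)%:P * f.

Lemma derivn_binom_op f j :
  (binom_op f)^`(j) = ('X + 1) * f^`(j.+1) - (d%:R - j%:R)%:P * f^`(j).
Proof.
elim: j => [|j IHj]; first by rewrite derivn0 subr0 derivn1.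
rewrite derivnS IHj derivB !derivM derivD derivX !derivC addr0 mul0r add0r.
rewrite -!derivnS -natr1 !polyCB polyCD polyC1.
ring.
Qed.

Lemma coef_trunc_binom m k :
  (trunc_binom R m d)`_k = if (k <= m)%N then 'C(d, k)%:R else 0.
Proof. by rewrite /trunc_binom -(poly_def _ (fun j => ('C(d, j))%:R)) coef_poly ltnS. Qed.

Lemma coef_binom_op f k :
  (binom_op f)`_k = f`_k *+ k + f`_k.+1 *+ k.+1 - d%:R * f`_k.
Proof.
rewrite /binom_op mulrDl mul1r coefB coefD coefXM coefCM !coef_deriv.
by case: k => [|k]; rewrite ?mulr0n.
Qed.

Lemma binom_op_trunc_binom m : (m <= d)%N ->
  binom_op (trunc_binom R m d) = - ((d - m) * 'C(d, m))%:R *: 'X^m.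
Proof.
move=> le_md; apply/polyP => k.
rewrite coef_binom_op !coef_trunc_binom coefZ coefXn.
case: (ltngtP k m) => [lt_km|lt_mk|->]; rewrite ?mulr0 ?mulr1.
- have le_kd : (k <= d)%N := ltnW (leq_trans lt_km le_md).
  have Ck : ('C(d, k) * k + 'C(d, k.+1) * k.+1 = d * 'C(d, k))%N.
    by rewrite [X in (_ + X)%N]mulnC mul_bin_left mulnC -mulnDl subnKC.
  by rewrite -!mulrnA -natrD Ck natrM subrr.
- by rewrite !mul0rn addr0 subr0.
- by rewrite mul0rn addr0 -mulrnA !natrM natrB //; ring.
Qed.

Lemma trunc_binom_full : trunc_binom R d d = ('X + 1) ^+ d.
Proof. by rewrite exprD1n /trunc_binom; apply: eq_bigr => i _; rewrite scaler_nat. Qed.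

Definition wronskian n (f : 'I_n -> {poly R}) : 'M[{poly R}]_n :=
  \matrix_(i, j) (f i)^`(j).

(* Right multiplication by this matrix keeps column 0 of a Wronskian and
   replaces column j.+1 by the j-th derivative of [binom_op], see
   [derivn_binom_op]. *)
Definition binom_op_mx n : 'M[{poly R}]_n.+1 := \matrix_(k, j)
  (if j == 0 :> nat then (k == 0 :> nat)%:R
   else if k == j :> nat then 'X + 1
   else if k.+1 == j :> nat then - (d%:R - k%:R)%:P else 0).

Lemma det_binom_op_mx n : \det (binom_op_mx n) = ('X + 1) ^+ n.
Proof.
rewrite -det_tr det_trig.
  rewrite big_ord_recl !mxE /= mul1r.
  under eq_bigr do rewrite !mxE /= eqxx.
  by rewrite prodr_const card_ord.
apply/is_trig_mxP => i j lt_ij; rewrite !mxE.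
have [-> -> ->] : [/\ (j == 0 :> nat) = false, (j == i :> nat) = false
                    & (j.+1 == i :> nat) = false] by split; lia.
by case: ifP.
Qed.

Lemma wronskian_binom_op_mx0 n (f : 'I_n.+1 -> {poly R}) r :
  (wronskian f *m binom_op_mx n) r 0 = f r.
Proof.
rewrite !mxE (bigD1 ord0) //= big1 ?addr0; first by rewrite !mxE /= mulr1.
move=> k nz_k; rewrite !mxE /=.
have -> : (k == 0 :> nat) = false.
  by apply: contraNF nz_k => /eqP k0; apply/eqP/val_inj.
by rewrite mulr0.
Qed.

Lemma wronskian_binom_op_mxS n (f : 'I_n.+1 -> {poly R}) r (j : 'I_n) :
  (wronskian f *m binom_op_mx n) r (lift 0 j) = (binom_op (f r))^`(j).
Proof.
rewrite derivn_binom_op !mxE (bigD1 (lift 0 j)) //=.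
rewrite (bigD1 (widen_ord (leqnSn n) j)) /=; last first.
  by rewrite -val_eqE /= /bump /=; lia.
rewrite big1 ?addr0.
  rewrite !mxE /= /bump /= add1n eqxx /=.
  have -> : (j == j.+1 :> nat) = false by lia.
  by rewrite add0n -derivnS mulrC [_ * - _]mulrC mulNr.
move=> k /andP [k1 k2]; rewrite !mxE /= /bump /= add1n.
have -> : (k == j.+1 :> nat) = false.
  by apply: contraNF k1 => /eqP e; apply/eqP/val_inj; rewrite /= /bump /= add1n.
have -> : (k.+1 == j.+1 :> nat) = false.
  by apply: contraNF k2 => /eqP [e]; apply/eqP/val_inj.
by rewrite mulr0.
Qed.

Lemma det_wronskian_binom_op n (f : 'I_n.+1 -> {poly R}) :
  binom_op (f 0) = 0 ->
  \det (wronskian f) * ('X + 1) ^+ n =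
    f 0 * \det (wronskian (fun i => binom_op (f (lift 0 i)))).
Proof.
move=> f0_ann; rewrite -(det_binom_op_mx n) -det_mulmx.
rewrite (expand_det_row _ 0) big_ord_recl big1 ?addr0.
  rewrite wronskian_binom_op_mx0 /cofactor /= expr0 mul1r; congr (_ * \det _).
  apply/matrixP => i j.
  by rewrite [RHS]mxE -wronskian_binom_op_mxS [LHS]mxE [LHS]mxE.
by move=> j _; rewrite wronskian_binom_op_mxS f0_ann linear0 mul0r.
Qed.

End BinomialOperator.

Lemma sum_subn_perm n (s : 'S_n) (e : 'I_n -> nat) :
  (forall i, s i <= e i)%N ->
  (\sum_i (e i - s i) = \sum_i e i - \sum_(i < n) i)%N.
Proof.
move=> le_se.
have -> : (\sum_(i < n) i = \sum_i s i)%N by rewrite (reindex_inj (@perm_inj _ s)).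
apply/eqP; rewrite -(eqn_add2r (\sum_i s i)) subnK; last exact: leq_sum.
by rewrite -big_split /=; apply/eqP/eq_bigr => i _; rewrite subnK.
Qed.

Section MonomialMatrix.
Variable R : comNzRingType.

Lemma prod_scale_Xn (I : finType) (a : I -> R) (b : I -> nat) :
  \prod_i (a i *: 'X^(b i)) = (\prod_i a i) *: 'X^(\sum_i b i).
Proof.
rewrite -mul_polyC rmorph_prod -prodrXr -big_split /=.
by apply: eq_bigr => i _; rewrite mul_polyC.
Qed.

Lemma det_scale_Xn_mx n (A : 'M[R]_n) (e : 'I_n -> nat) :
  (forall i j : 'I_n, (e i < j)%N -> A i j = 0) ->
  \det (\matrix_(i, j) (A i j *: 'X^(e i - j))) =
    \det A *: 'X^(\sum_i e i - \sum_(i < n) i).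
Proof.
move=> A0; rewrite /determinant scaler_suml; apply: eq_bigr => s _.
under eq_bigr do rewrite mxE.
rewrite -scalerA -[in RHS]mul_polyC rmorphXn rmorphN1; congr (_ * _).
case: (boolP [exists i, e i < s i]%N) => [/existsP [i lt_es]|/existsP no_lt].
  by rewrite (bigD1 i) //= [X in _ = X *: _](bigD1 i) //= A0 // !(scale0r, mul0r).
rewrite prod_scale_Xn sum_subn_perm // => i.
by rewrite leqNgt; apply/negP => lt_es; apply: no_lt; exists i.
Qed.

End MonomialMatrix.

Section FallingFactorialMatrix.
Variable R : numDomainType.

Definition ffact_poly (j : nat) : {poly R} := \prod_(k < j) ('X - k%:R%:P).

Lemma horner_ffact_poly j x : (ffact_poly j).[x%:R] = (x ^_ j)%:R.
Proof.
elim: j => [|j IHj]; first by rewrite /ffact_poly big_ord0 hornerC ffactn0.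
rewrite /ffact_poly big_ord_recr /= hornerM -/(ffact_poly j) IHj hornerXsubC.
rewrite ffactnSr natrM; case: (leqP j x) => [le_jx|lt_xj]; first by rewrite natrB.
by rewrite ffact_small // !mul0r.
Qed.

Lemma size_ffact_poly j : size (ffact_poly j) = j.+1.
Proof. by rewrite size_prod_XsubC [index_enum _]unlock -enumT size_enum_ord. Qed.

Lemma monic_ffact_poly j : ffact_poly j \is monic.
Proof. exact: monic_prod_XsubC. Qed.

(* The matrix factors as a Vandermonde matrix times the unitriangular matrix
   of coefficients of the falling factorial polynomials. *)
Lemma det_ffact_mx_neq0 n (a : 'I_n -> nat) : injective a ->
  \det (\matrix_(i, j) ((a i) ^_ j)%:R : 'M[R]_n) != 0.
Proof.
move=> inj_a.
pose V : 'M[R]_n := \matrix_(i, k) ((a i)%:R ^+ k).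
pose T : 'M[R]_n := \matrix_(k, j) (ffact_poly j)`_k.
have -> : \matrix_(i, j) ((a i) ^_ j)%:R = V *m T.
  apply/matrixP => i j; rewrite !mxE -horner_ffact_poly (@horner_coef_wide _ n).
    by apply: eq_bigr => k _; rewrite !mxE mulrC.
  by rewrite size_ffact_poly.
have detT : \det T = 1.
  rewrite -det_tr det_trig.
    apply: big1 => i _; rewrite !mxE.
    by have /monicP := monic_ffact_poly i; rewrite /lead_coef size_ffact_poly.
  by apply/is_trig_mxP => i j lt_ij; rewrite !mxE nth_default // size_ffact_poly.
have -> : V = (Vandermonde n (\row_i (a i)%:R))^T.
  by apply/matrixP => i k; rewrite !mxE.
rewrite det_mulmx detT mulr1 det_tr det_Vandermonde.
apply/prodf_neq0 => i _; apply/prodf_neq0 => j lt_ij.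
rewrite !mxE subr_eq0 eqr_nat; apply: contraTN lt_ij => /eqP/inj_a ->.
by rewrite ltnn.
Qed.

End FallingFactorialMatrix.

Lemma det_wronskian_binom_op_trunc_binom (R : numDomainType) n d
    (e : 'I_n -> nat) :
  injective e -> (forall i, e i < d)%N ->
  exists2 c : R, c != 0 &
    \det (wronskian (fun i => binom_op d (trunc_binom R (e i) d))) =
      c *: 'X^(\sum_i e i - \sum_(i < n) i).
Proof.
move=> inj_e lt_ed.
pose c i : R := - ((d - e i) * 'C(d, e i))%:R.
pose A : 'M[R]_n := \matrix_(i, j) (c i * ((e i) ^_ j)%:R).
exists (\det A).
  have -> : A = diag_mx (\row_i c i) *m \matrix_(i, j) ((e i) ^_ j)%:R.
    by rewrite mul_diag_mx; apply/matrixP => i j; rewrite !mxE.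
  rewrite det_mulmx det_diag mulf_neq0 ?det_ffact_mx_neq0 //.
  apply/prodf_neq0 => i _; rewrite mxE oppr_eq0 pnatr_eq0 muln_eq0 negb_or.
  by rewrite subn_eq0 -ltnNge lt_ed -lt0n bin_gt0 ltnW.
rewrite -det_scale_Xn_mx; last first.
  by move=> i j lt_ej; rewrite mxE ffact_small // mulr0n mulr0.
congr (\det _); apply/matrixP => i j.
rewrite /wronskian !mxE binom_op_trunc_binom; last exact: ltnW.
by rewrite derivnZ derivnXn -scalerMnr scalerMnl mulr_natr.
Qed.

Lemma incr_ltn_in N (m : nat -> nat) :
  (forall i, (0 < i < N)%N -> (m i < m i.+1)%N) ->
  {in [pred i | 0 < i <= N]%N &, {homo m : i j / (i < j)%N}}.
Proof.
move=> m_incr; apply: homo_ltn_in => [y x z|i j|i].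
- exact: ltn_trans.
- rewrite !inE => /andP [i_gt0 _] /andP [_ le_jN] k /andP [lt_ik lt_kj].
  by rewrite inE (ltn_trans i_gt0 lt_ik) (leq_trans (ltnW lt_kj) le_jN).
- by rewrite !inE => /andP [i_gt0 _] /andP [_ le_iN]; rewrite m_incr ?i_gt0.
Qed.

Lemma incr_pred_leq N (m : nat -> nat) :
  (forall i, (0 < i < N)%N -> (m i < m i.+1)%N) ->
  forall i, (0 < i <= N)%N -> (i.-1 <= m i)%N.
Proof.
move=> m_incr; elim=> [//|[|i] IHi] /andP [_ le_iN] //=.
by have := m_incr i.+1; have := IHi (ltnW le_iN); lia.
Qed.

Lemma incr_ltn_last N (m : nat -> nat) b :
  (forall i, (0 < i < N)%N -> (m i < m i.+1)%N) -> (m N < b)%N ->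
  forall i, (0 < i <= N)%N -> (m i < b)%N.
Proof.
move=> m_incr lt_mN_b i /andP [i_gt0]; rewrite leq_eqVlt.
case/orP=> [/eqP -> //|lt_iN]; apply: ltn_trans lt_mN_b.
apply: (incr_ltn_in m_incr) => //.
  by rewrite inE i_gt0 ltnW.
by rewrite inE (ltn_trans i_gt0 lt_iN) leqnn.
Qed.

Lemma incr_shift_inj N (m : nat -> nat) :
  (forall i, (0 < i < N)%N -> (m i < m i.+1)%N) ->
  injective (fun i : 'I_N => m i.+1).
Proof.
move=> m_incr i j eq_m.
have m_homo (k l : 'I_N) : (k < l)%N -> (m k.+1 < m l.+1)%N.
  by move=> lt_kl; apply: (incr_ltn_in m_incr); rewrite ?inE /= ?ltn_ord.
by case: (ltngtP i j) => [/m_homo|/m_homo|/val_inj //]; rewrite eq_m ltnn.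
Qed.

Theorem mainTheorem2 (R : numFieldType) (N d : nat) (m : nat -> nat) :
  (1 <= N)%N ->
  (forall i : nat, (1 <= i < N)%N -> (m i < m i.+1)%N) ->
  (m N < d)%N ->
  exists c : R, c != 0 /\
    \det (wronski_tb R N d m) =
      c *: ('X ^+ ((\sum_(1 <= i < N.+1) m i) - (N * N.-1) %/ 2)%N
            * ('X + 1) ^+ (d - N)%N).
Proof.
move=> N_gt0 m_incr lt_mN_d.
have le_Nd : (N <= d)%N.
  by have := @incr_pred_leq N m m_incr N; rewrite N_gt0 leqnn => /(_ isT); lia.
have lt_m_d (i : 'I_N) : (m i.+1 < d)%N.
  by apply: (incr_ltn_last m_incr lt_mN_d); rewrite ltn_ord.
have [c c_neq0 det_rows] :=
  det_wronskian_binom_op_trunc_binom R (incr_shift_inj m_incr) lt_m_d.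
exists c; split => //.
pose f (i : 'I_N.+1) := trunc_binom R (if i == 0 :> nat then d else m i) d.
have f0_ann : binom_op d (f 0) = 0.
  by rewrite binom_op_trunc_binom // subnn mul0n oppr0 scale0r.
have := det_wronskian_binom_op f0_ann; rewrite [f 0]trunc_binom_full det_rows.
have -> : (\sum_(i < N) m i.+1 - \sum_(i < N) i =
           \sum_(1 <= i < N.+1) m i - (N * N.-1) %/ 2)%N.
  by rewrite big_add1 big_mkord divn2 -bin2 -bin2_sum big_mkord.
have XN_neq0 : ('X + 1 : {poly R}) ^+ N != 0.
  by rewrite expf_neq0 // -size_poly_eq0 -polyC1 size_XaddC.
move=> eq_det; apply: (mulIf XN_neq0); rewrite [LHS]eq_det.
by rewrite -{1}(subnK le_Nd) exprD -!mul_polyC; ring.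
Qed.
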